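(* Let $\gamma_1,\gamma_2>0$ and consider the birth-death chain RDS $(\theta,\varphi)$ on $\mathbb{N}_0$ described in the context. For every $(x_0,y_0)\in\mathbb{N}_0^2$, the two-point motion $(\varphi^n_q(x_0),\varphi^n_q(y_0))_{n\in\mathbb{N}_0}$ reaches the thick diagonal $\mathbb{D}:=\{(x,y)\in\mathbb{N}_0^2: y\in\{x-1,x,x+1\}\}$ in finite time $\mathbb{P}$-almost surely, i.e. $\mathbb{P}\big(\exists n\geq0: (\varphi^n_q(x_0),\varphi^n_q(y_0))\in\mathbb{D}\big)=1$.
   Context: Noise space: $\mathcal{Q}_+=\{q=(q_n)_{n\in\mathbb{N}_0}: q_n\in[0,1]\}$ with the product Borel $\sigma$-algebra and the product measure $\mathbb{P}=\lambda^{\mathbb{N}_0}$, $\lambda$ Lebesgue measure on $[0,1]$; shift $\theta(q_0,q_1,\dots)=(q_1,q_2,\dots)$. For $q\in\mathcal{Q}_+$ define $f_q:\mathbb{N}_0\to\mathbb{N}_0$ by $f_q(x)=x+1$ if $q_0<\frac{\gamma_1}{\gamma_1+\gamma_2x}$ and $f_q(x)=x-1$ otherwise. The cocycle is $\varphi^0_q(x)=x$ and $\varphi^n_q(x)=f_{\theta^{n-1}q}\circ\cdots\circ f_q(x)$ for $n\geq1$. The pair $(\varphi^n_q(x_0),\varphi^n_q(y_0))_n$ with the same $q$ is called the two-point motion. *)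

From HB Require Import structures.
From mathcomp Require Import all_boot all_order all_algebra.
From mathcomp Require Import all_classical all_reals all_analysis.
Set Implicit Arguments. Unset Strict Implicit. Unset Printing Implicit Defensive.
Import Order.TTheory GRing.Theory Num.Theory.
Import numFieldNormedType.Exports.
Local Open Scope classical_set_scope.
Local Open Scope ring_scope.

Section Defs.
Variable R : realType.

Definition seqR : Type := nat -> R.

Definition coord_sets : set (set seqR) :=
  [set A | exists n (B : set R), measurable B /\ A = (fun q : seqR => q n) @^-1` B].

Definition Qplus := g_sigma_algebraType coord_sets.

Definition unit_interval : set R := `[0, 1]%classic.

(* P is the product measure lambda^{N_0} of Lebesgue measure on [0,1]:
   its value on every finite-dimensional cylinder is the product of the
   Lebesgue measures of the (restricted to [0,1]) Borel bases. *)
Definition is_product_uniform (P : probability Qplus R) : Prop :=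
  forall (n : nat) (B : nat -> set R), (forall i, measurable (B i)) ->
    P (\bigcap_(i in `I_n) ((fun q : Qplus => q i) @^-1` B i)) =
    (\prod_(i < n) (@lebesgue_measure R) (B i `&` unit_interval))%E.

Definition shiftn (m : nat) (q : nat -> R) : nat -> R := fun k => q (k + m)%N.

(* one step f_q of the birth-death chain (x - 1 is truncated at 0, only
   relevant on the null event q_0 = 1 when x = 0) *)
Definition fstep (g1 g2 : R) (q : nat -> R) (x : nat) : nat :=
  if q 0%N < g1 / (g1 + g2 * x%:R) then x.+1 else x.-1.

Fixpoint phi (g1 g2 : R) (n : nat) (q : nat -> R) (x : nat) : nat :=
  match n with
  | 0 => x
  | m.+1 => fstep g1 g2 (shiftn m q) (phi g1 g2 m q x)
  end.

End Defs.

Definition thick_diag (x y : nat) : Prop :=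
  (y.+1 = x) \/ y = x \/ y = x.+1.

From HB Require Import structures.
From mathcomp Require Import all_boot all_order all_algebra.
From mathcomp Require Import all_classical all_reals all_analysis.
From mathcomp Require Import zify ring lra.
Import Order.TTheory GRing.Theory Num.Theory.
Import numFieldNormedType.Exports.
Local Open Scope classical_set_scope.
Local Open Scope ring_scope.

(* Both points are driven by the same noise.  The up-probability
   birth x = g1 / (g1 + g2 x) decreases in x, so from x + 2 <= y the pair moves
   to (x+1, y+1), (x+1, y-1) or (x-1, y-1) and stays ordered until it reaches
   the thick diagonal.  With K = 3 g1 / g2 + 2, the function
   V(x, y) = 2 x + K (y - x) decreases by at least 1 in expectation at each step
   off the diagonal.  Hence if a_k bounds the probability of avoiding the
   diagonal up to time k, then a_0 + ... + a_(m-1) <= V(x0, y0); the probability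
   of never reaching it is at most every a_k, hence at most V(x0, y0) / m. *)

Definition thick_diagb (x y : nat) : bool := [|| y.+1 == x, y == x | y == x.+1].

Lemma thick_diagP x y : reflect (thick_diag x y) (thick_diagb x y).
Proof.
rewrite /thick_diag /thick_diagb.
apply: (iffP or3P) => [[] /eqP ->|[<-|[->|->]]]; auto.
- exact: Or31.
- exact: Or32.
- exact: Or33.
Qed.

Lemma thick_diag_sym x y : thick_diag x y -> thick_diag y x.
Proof. by case=> [<-|[->|->]]; [right; right | right; left | left]. Qed.

Lemma not_thick_diagb_gap x y :
  (x <= y)%N -> ~~ thick_diagb x y -> (x.+2 <= y)%N.
Proof. by rewrite /thick_diagb !negb_or => ? /and3P[? ? ?]; lia. Qed.

Lemma natmul_bounded_le0 (F : archiRealFieldType) (r C : F) :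
  (forall m : nat, m%:R * r <= C) -> r <= 0.
Proof.
move=> bnd; rewrite leNgt; apply/negP => r_gt0.
have C_ge0 : 0 <= C by have := bnd 0%N; rewrite mul0r.
have := archi_boundP (divr_ge0 C_ge0 (ltW r_gt0)).
by rewrite ltr_pdivrMr // => /lt_le_trans/(_ (bnd _)); rewrite ltxx.
Qed.

Section measure_facts.
Context {d : measure_display} {T : measurableType d}.

Lemma measurable_const_set (Pr : Prop) : measurable [set _ : T | Pr].
Proof.
have [h|h] := pselect Pr; [rewrite (propT h) | rewrite (propF h)].
- exact: measurableT.
- exact: measurable0.
Qed.

Context {R : realType} (mu : {measure set T -> \bar R}).

Lemma measure_split3 (A C1 C2 C3 : set T) : C1 `|` C2 `|` C3 = setT ->
  measurable A -> measurable C1 -> measurable C2 -> measurable C3 ->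
  (mu A <= mu (A `&` C1) + mu (A `&` C2) + mu (A `&` C3))%E.
Proof.
move=> cover mA mC1 mC2 mC3.
have mAC C : measurable C -> measurable (A `&` C) by exact: measurableI.
rewrite -[X in mu X]setIT -cover !setIUr.
apply: (le_trans (measureU2 _ _ (mAC _ mC3))); first by apply: measurableU; exact: mAC.
by rewrite leeD2r // measureU2 //; exact: mAC.
Qed.

End measure_facts.

Lemma lebesgue_unit_pieces (R : realType) (a b : R) : 0 <= b -> b <= a -> a <= 1 ->
  [/\ lebesgue_measure (`]-oo, b[ `&` @unit_interval R) = b%:E,
      lebesgue_measure (`[b, a[ `&` @unit_interval R) = (a - b)%:E &
      lebesgue_measure (`[a, +oo[ `&` @unit_interval R) = (1 - a)%:E].
Proof.
move=> b_ge0 le_ba a_le1.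
have hif (l u : R) :
    l <= u -> (if l%:E < u%:E then u%:E - l%:E else 0)%E = (u - l)%:E.
  by rewrite lte_fin le_eqVlt => /predU1P[->|->]; rewrite ?ltxx ?subrr.
have a_ge0 := le_trans b_ge0 le_ba.
rewrite /unit_interval -!set_itvI !lebesgue_measure_itv /=.
rewrite (join_l b_ge0) (join_l a_ge0) !meet_l ?(le_trans le_ba) //.
by split; rewrite hif ?subr0.
Qed.

Section BirthDeath.
Variables (R : realType) (g1 g2 : R).
Hypotheses (g1_gt0 : 0 < g1) (g2_gt0 : 0 < g2).

Definition birth (x : nat) : R := g1 / (g1 + g2 * x%:R).

Definition step (r : R) (x : nat) : nat := if r < birth x then x.+1 else x.-1.

Lemma birth_den_gt0 x : 0 < g1 + g2 * x%:R.
Proof. by rewrite ltr_wpDr // mulr_ge0 // ltW. Qed.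

Lemma birth_gt0 x : 0 < birth x.
Proof. by rewrite divr_gt0 ?birth_den_gt0. Qed.

Lemma birth_le1 x : birth x <= 1.
Proof. by rewrite ler_pdivrMr ?birth_den_gt0 // mul1r lerDl mulr_ge0 // ltW. Qed.

Lemma birth0 : birth 0 = 1.
Proof. by rewrite /birth mulr0 addr0 divff // gt_eqF. Qed.

Lemma birth_nonincr x y : (x <= y)%N -> birth y <= birth x.
Proof.
move=> le_xy; rewrite ler_pM2l // lef_pV2 ?posrE ?birth_den_gt0 // lerD2l.
by rewrite ler_wpM2l ?ler_nat // ltW.
Qed.

Lemma step_up r x : r < birth x -> step r x = x.+1.
Proof. by rewrite /step => ->. Qed.

Lemma step_down r x : birth x <= r -> step r x = x.-1.
Proof. by rewrite /step ltNge => ->. Qed.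

Lemma phiS n q x : phi g1 g2 n.+1 q x = step (q n) (phi g1 g2 n q x).
Proof. by rewrite /= /fstep /shiftn add0n. Qed.

Lemma phi_shiftnS i j q x :
  phi g1 g2 i.+1 (shiftn j q) x = phi g1 g2 i (shiftn j.+1 q) (step (q j) x).
Proof.
elim: i => [|i IH]; first by rewrite phiS /shiftn add0n.
by rewrite phiS IH phiS /shiftn addSnnS.
Qed.

(* The same coordinate r drives both points: for x <= y both go up if
   r < birth y, x goes up and y down if birth y <= r < birth x, and both go
   down otherwise. *)
Definition Estep (F : nat -> nat -> R) (x y : nat) : R :=
  birth y * F x.+1 y.+1 + (birth x - birth y) * F x.+1 y.-1
  + (1 - birth x) * F x.-1 y.-1.

Lemma Estep_mono F F' x y : (x.+2 <= y)%N ->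
  (forall u v, (u <= v)%N -> F u v <= F' u v) -> Estep F x y <= Estep F' x y.
Proof.
move=> gap le_FF'.
have birth_xy : 0 <= birth x - birth y by rewrite subr_ge0 birth_nonincr //; lia.
have birth_x : 0 <= 1 - birth x by rewrite subr_ge0 birth_le1.
by rewrite !lerD // ler_wpM2l ?le_FF' ?(ltW (birth_gt0 _)) //; lia.
Qed.

Lemma Estep_sum m (F : nat -> nat -> nat -> R) x y :
  Estep (fun u v => \sum_(k < m) F k u v) x y = \sum_(k < m) Estep (F k) x y.
Proof. by rewrite /Estep !mulr_sumr -!big_split. Qed.

Definition lyap_slope : R := 3 * g1 / g2 + 2.

Definition lyap (x y : nat) : R := 2 * x%:R + lyap_slope * (y%:R - x%:R).

Lemma lyap_slope_ge2 : 2 <= lyap_slope.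
Proof. by rewrite lerDr divr_ge0 // ?mulr_ge0 // ltW. Qed.

Lemma lyap_ge0 x y : (x <= y)%N -> 0 <= lyap x y.
Proof.
move=> le_xy; rewrite addr_ge0 ?mulr_ge0 ?subr_ge0 ?ler_nat //.
exact: le_trans lyap_slope_ge2.
Qed.

Lemma birth_gap x y : (x.+2 <= y)%N ->
  4 * birth x - 1 <= 2 * lyap_slope * (birth x - birth y).
Proof.
move=> gap; rewrite -subr_ge0 /birth.
have [s_gt0 t_gt0] := (birth_den_gt0 x, birth_den_gt0 y).
set s := g1 + g2 * x%:R in s_gt0 *; set t := g1 + g2 * y%:R in t_gt0 *.
have u_ge : 2 * g2 <= t - s.
  have -> : t - s = (y - x)%:R * g2.
    by rewrite natrB /s /t; [ring | lia].
  by rewrite ler_wpM2r ?(ltW g2_gt0) // ler_nat; lia.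
have slope : lyap_slope * g2 = 3 * g1 + 2 * g2.
  by rewrite /lyap_slope mulrDl mulfVK ?gt_eqF.
have -> : 2 * lyap_slope * (g1 / s - g1 / t) - (4 * (g1 / s) - 1) =
    ((t - s) * (2 * lyap_slope * g1 - 4 * g1 + s) - 4 * g1 * s + s ^+ 2) / (s * t).
  by field; rewrite ?gt_eqF.
apply: divr_ge0; last by rewrite mulr_ge0 // ltW.
have coef : 0 <= 2 * lyap_slope * g1 - 4 * g1 + s.
  by have := lyap_slope_ge2; rewrite -subr_ge0 => /mulr_ge0/(_ (ltW g1_gt0)); lra.
(* (t - s) * coef >= 2 * g2 * coef = 12 * g1 ^+ 2 + 2 * g2 * s by the choice of
   lyap_slope, and 12 * g1 ^+ 2 - 4 * g1 * s + s ^+ 2 >= 0. *)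
have := ler_wpM2r coef u_ge.
have : g1 * (lyap_slope * g2) = g1 * (3 * g1 + 2 * g2) by rewrite slope.
have : 0 <= (s - 2 * g1) ^+ 2 by exact: sqr_ge0.
have : 0 <= g2 * s by rewrite mulr_ge0 ?ltW.
nra.
Qed.

Lemma lyap_drift x y : (x.+2 <= y)%N -> Estep lyap x y <= lyap x y - 1.
Proof.
move=> gap; have := birth_gap _ _ gap.
have -> : y = y.-2.+2 by lia.
rewrite /Estep /lyap /=.
(* at x = 0 the down-move has probability 1 - birth 0 = 0, so 0.-1 = 0 is harmless *)
case: x gap => [|x] gap; first by rewrite birth0 !subrr !mul0r; lra.
rewrite -!natr1; lra.
Qed.

Fixpoint survival (m x y : nat) : R :=
  if thick_diagb x y then 0
  else if m is m'.+1 then Estep (survival m') x y else 1.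

Lemma sum_survival_le_lyap m x y :
  (x <= y)%N -> \sum_(k < m) survival k x y <= lyap x y.
Proof.
elim: m x y => [|m IH] x y le_xy; first by rewrite big_ord0 lyap_ge0.
have [thick|nthick] := boolP (thick_diagb x y).
  by rewrite big1 ?lyap_ge0 // => -[[|k] ?] _ /=; rewrite thick.
have gap := not_thick_diagb_gap _ _ le_xy nthick.
rewrite big_ord_recl /= (negbTE nthick).
under eq_bigr do rewrite add0n.
rewrite -Estep_sum.
have : Estep (fun u v => \sum_(k < m) survival k u v) x y <= Estep lyap x y.
  exact: Estep_mono.
have := lyap_drift _ _ gap; lra.
Qed.

Definition survive (m j x y : nat) : set (Qplus R) :=
  [set q | forall i, (i <= m)%N ->
     ~ thick_diag (phi g1 g2 i (shiftn j q) x) (phi g1 g2 i (shiftn j q) y)].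

Lemma survive0 j x y : survive 0 j x y = [set _ | ~ thick_diag x y].
Proof.
by apply/seteqP; split=> q /= => [avoid|nthick [|//]]; [exact: (avoid 0%N) | ].
Qed.

Lemma surviveS m j x y : survive m.+1 j x y =
  [set _ | ~ thick_diag x y] `&` [set q | survive m j.+1 (step (q j) x) (step (q j) y) q].
Proof.
apply/seteqP; split=> q /=.
  move=> avoid; split; first exact: (avoid 0%N).
  by move=> i le_im; rewrite -!phi_shiftnS; exact: avoid.
by move=> [nthick avoid] [|i] // le_im; rewrite !phi_shiftnS; exact: avoid.
Qed.

Lemma survive_thick m j x y : thick_diag x y -> survive m j x y = set0.
Proof. by move=> thick; apply/seteqP; split=> // q /= /(_ 0%N (leq0n m)). Qed.

Lemma measurable_coord j (B : set R) : measurable B ->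
  measurable ((fun q : Qplus R => q j) @^-1` B).
Proof. by move=> mB; apply: sub_sigma_algebra; exists j, B. Qed.

Lemma measurable_after_step j x (G : nat -> set (Qplus R)) :
  (forall z, measurable (G z)) -> measurable [set q : Qplus R | G (step (q j) x) q].
Proof.
move=> mG; set up := (fun q : Qplus R => q j) @^-1` `]-oo, birth x[.
have mup : measurable up by apply: measurable_coord; exact: measurable_itv.
have -> : [set q : Qplus R | G (step (q j) x) q] = (up `&` G x.+1) `|` (~` up `&` G x.-1).
  apply/seteqP; split=> q; rewrite /up /= in_itv /= /step; case: ifP => _.
  - by left.
  - by right.
  - by case=> -[].
  - by case=> -[].
by apply: measurableU; apply: measurableI => //; exact: measurableC.
Qed.

Lemma measurable_survive m j x y : measurable (survive m j x y).
Proof.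
elim: m j x y => [|m IH] j x y; first by rewrite survive0; exact: measurable_const_set.
rewrite surviveS; apply: measurableI; first exact: measurable_const_set.
apply: (measurable_after_step _ _
  (fun x' => [set q : Qplus R | survive m j.+1 x' (step (q j) y) q])) => x'.
exact: (measurable_after_step _ _ (fun y' => survive m j.+1 x' y')).
Qed.

Definition cyl (j : nat) (B : nat -> set R) : set (Qplus R) :=
  \bigcap_(i in `I_j) ((fun q : Qplus R => q i) @^-1` B i).

Lemma measurable_cyl j B : (forall i, measurable (B i)) -> measurable (cyl j B).
Proof. by move=> mB; apply: bigcap_measurableType => i _; exact: measurable_coord. Qed.

Lemma cyl0 B : cyl 0 B = setT.
Proof. by apply/seteqP; split=> q // _ i /=; rewrite ltn0. Qed.

Lemma cylS j B S :
  cyl j.+1 [eta B with j |-> S] = cyl j B `&` (fun q : Qplus R => q j) @^-1` S.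
Proof.
apply/seteqP; split=> q /=.
  move=> Bq; split; last by have := Bq j; rewrite /= eqxx; apply.
  by move=> i /= lt_ij; have := Bq i; rewrite /= ifN_eq ?ltn_eqF //; apply; lia.
move=> [Bq Sq] i /= le_ij; case: eqP => [->//|ne_ij].
by apply: Bq => /=; lia.
Qed.

Variable P : probability (Qplus R) R.
Hypothesis P_product : is_product_uniform P.

Lemma prob_cylS j B S : (forall i, measurable (B i)) -> measurable S ->
  P (cyl j B `&` (fun q : Qplus R => q j) @^-1` S) =
  (P (cyl j B) * lebesgue_measure (S `&` @unit_interval R))%E.
Proof.
move=> mB mS; rewrite -cylS /cyl !P_product //; last by move=> i /=; case: eqP.
rewrite big_ord_recr /= eqxx; congr (_ * _)%E.
by apply: eq_bigr => i _; rewrite /= ifN_eq // ltn_eqF.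
Qed.

(* Conditioning on an arbitrary cylinder over the first j coordinates lets the
   induction on m use nothing but the product formula for cylinders. *)
Definition survival_bound (m : nat) : Prop :=
  forall j x y B, (forall i, measurable (B i)) -> (x <= y)%N ->
  (P (cyl j B `&` survive m j x y) <= P (cyl j B) * (survival m x y)%:E)%E.

Lemma survival_bound0 : survival_bound 0.
Proof.
move=> j x y B _ _ /=; case: thick_diagP => [thick|nthick].
  by rewrite mule0 survive_thick ?setI0 ?measure0.
by rewrite mule1 survive0 (_ : [set _ | _] = setT) ?setIT //; apply/seteqP; split.
Qed.

Lemma prob_survive_piece m j x y x' y' B S :
  survival_bound m -> (forall i, measurable (B i)) -> measurable S ->
  (x' <= y')%N -> (forall r, S r -> step r x = x' /\ step r y = y') ->
  (P (cyl j B `&` survive m.+1 j x y `&` (fun q : Qplus R => q j) @^-1` S) <=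
   P (cyl j B) * lebesgue_measure (S `&` @unit_interval R) * (survival m x' y')%:E)%E.
Proof.
move=> bound_m mB mS le_xy' stepS.
have mB' : forall i, measurable ([eta B with j |-> S] i) by move=> i /=; case: eqP.
rewrite setIAC -prob_cylS // -cylS.
apply: le_trans (bound_m _ _ _ _ mB' le_xy'); apply: le_measure; rewrite ?inE.
- by apply: measurableI; [exact: measurable_cyl | exact: measurable_survive].
- by apply: measurableI; [exact: measurable_cyl | exact: measurable_survive].
rewrite cylS surviveS => q [[Bq Sq] [_ /=]].
by have [-> ->] := stepS _ Sq.
Qed.

Lemma survival_boundS m : survival_bound m -> survival_bound m.+1.
Proof.
move=> bound_m j x y B mB le_xy.
have [thick|nthick] := boolP (thick_diagb x y).
  by rewrite /= thick mule0 survive_thick ?setI0 ?measure0 //; exact/thick_diagP.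
have gap := not_thick_diagb_gap _ _ le_xy nthick.
have b_le_a : birth y <= birth x by apply: birth_nonincr; lia.
have b_gt0 := birth_gt0 y; have a_le1 := birth_le1 x.
set a := birth x in b_le_a a_le1 *; set b := birth y in b_le_a b_gt0 *.
have [lam1 lam2 lam3] := @lebesgue_unit_pieces R a b (ltW b_gt0) b_le_a a_le1.
set A := cyl j B `&` survive m.+1 j x y.
have mA : measurable A.
  by apply: measurableI; [exact: measurable_cyl | exact: measurable_survive].
set at_j := fun S : set R => (fun q : Qplus R => q j) @^-1` S.
have mat_j (i : interval R) : measurable (at_j [set` i]).
  by apply: measurable_coord; exact: measurable_itv.
have cover : at_j `]-oo, b[%classic `|` at_j `[b, a[%classic
    `|` at_j `[a, +oo[%classic = setT.
  apply/seteqP; split=> // q _; rewrite /at_j /= !in_itv /= andbT.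
  by case: (ltP (q j) b) => qb; [|case: (ltP (q j) a) => qa];
    [left; left | left; right | right].
have p1 : (P (A `&` at_j `]-oo, b[%classic) <=
    P (cyl j B) * b%:E * (survival m x.+1 y.+1)%:E)%E.
  rewrite -lam1; apply: prob_survive_piece => // r /=; rewrite in_itv /= => rb.
  by rewrite !step_up // (lt_le_trans rb).
have p2 : (P (A `&` at_j `[b, a[%classic) <=
    P (cyl j B) * (a - b)%:E * (survival m x.+1 y.-1)%:E)%E.
  rewrite -lam2; apply: prob_survive_piece => //; first lia.
  by move=> r /=; rewrite in_itv /= => /andP[br ra]; rewrite step_up // step_down.
have p3 : (P (A `&` at_j `[a, +oo[%classic) <=
    P (cyl j B) * (1 - a)%:E * (survival m x.-1 y.-1)%:E)%E.
  rewrite -lam3; apply: prob_survive_piece => //; first lia.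
  by move=> r /=; rewrite in_itv /= andbT => ar; rewrite !step_down // (le_trans b_le_a).
apply: (le_trans (measure_split3 P _ _ _ _ cover mA (mat_j _) (mat_j _) (mat_j _))).
apply: (le_trans (leeD (leeD p1 p2) p3)).
have fin_cyl : P (cyl j B) \is a fin_num by apply: fin_num_measure; exact: measurable_cyl.
rewrite /= (negbTE nthick) -(fineK fin_cyl) -!EFinM -!EFinD lee_fin /Estep -/a -/b.
lra.
Qed.

Lemma prob_survive m x y : (x <= y)%N -> (P (survive m 0 x y) <= (survival m x y)%:E)%E.
Proof.
have bound_m : survival_bound m.
  by elim: m => [|m]; [exact: survival_bound0 | exact: survival_boundS].
move=> le_xy; have := bound_m 0%N x y (fun=> setT) (fun=> measurableT) le_xy.
by rewrite cyl0 setTI probability_setT mul1e.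
Qed.

Lemma never_thick_diag_null x y :
  (x <= y)%N -> P (\bigcap_m survive m 0 x y) = 0%E.
Proof.
move=> le_xy; set Z := \bigcap_m _.
have mZ : measurable Z by apply: bigcapT_measurable => m; exact: measurable_survive.
have fin_Z : P Z \is a fin_num by exact: fin_num_measure.
have Z_le k : (P Z <= (survival k x y)%:E)%E.
  apply: (le_trans _ (prob_survive k x y le_xy)).
  by apply: le_measure; rewrite ?inE //; [exact: measurable_survive | exact: bigcap_inf].
rewrite -(fineK fin_Z); congr EFin; apply/le_anti/andP; split; last first.
  by rewrite -lee_fin fineK // measure_ge0.
apply: (@natmul_bounded_le0 R _ (lyap x y)) => m.
apply: (le_trans _ (sum_survival_le_lyap m x y le_xy)).
rewrite mulr_natl -[X in _ *+ X]card_ord -sumr_const; apply: ler_sum => k _.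
by rewrite -lee_fin fineK.
Qed.

Lemma hit_thick_diagE x y :
  [set q : Qplus R | exists n, thick_diag (phi g1 g2 n q x) (phi g1 g2 n q y)] =
  ~` \bigcap_m survive m 0 x y.
Proof.
have shiftn0 (q : nat -> R) : shiftn 0 q = q by apply/funext => k; rewrite /shiftn addn0.
rewrite setC_bigcap; apply/seteqP; split=> q /=.
  by move=> [n thick]; exists n => // /(_ n (leqnn n)); rewrite shiftn0.
move=> [m _ nsurvive]; apply: contrapT => nhit.
by apply: nsurvive => i _; rewrite shiftn0 => thick; apply: nhit; exists i.
Qed.

End BirthDeath.

Theorem proposition3p3 (R : realType) (g1 g2 : R) (hg1 : 0 < g1) (hg2 : 0 < g2)
  (P : probability (Qplus R) R) (HP : is_product_uniform P) (x0 y0 : nat) :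
  P [set q : Qplus R | exists n : nat,
       thick_diag (phi g1 g2 n q x0) (phi g1 g2 n q y0)] = 1%E.
Proof.
wlog le_xy : x0 y0 / (x0 <= y0)%N.
  move=> sym; case: (leqP x0 y0) => [/sym //|/ltnW/sym <-].
  by congr (P _); apply/seteqP; split=> q [n thick]; exists n; exact: thick_diag_sym.
rewrite hit_thick_diagE probability_setC; last first.
  by apply: bigcapT_measurable => m; exact: measurable_survive.
by rewrite never_thick_diag_null // sube0.
Qed.
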